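(* Let $V$ be an amenable collection of vectors subordinate to a $\mathbb{Q}$-nef partition $E_1,\dots,E_{k+1}$ of a complete fan $\Sigma$ with functions $\varphi_1,\dots,\varphi_{k+1}$, and let $C$ be a minimal cone of $\Sigma$ such that $C\cap M_V$ is $1$-dimensional. Assume either (1) the divisor $D_{k+1}=\sum_{\rho\in E_{k+1}}D_\rho$ is Cartier, or (2) all divisors $D_i=\sum_{\rho\in E_i}D_\rho$, $1\le i\le k$, are Cartier. Then the point $\rho\in C\cap M_V\cap M$ with $\varphi_{k+1}(\rho)=1$ is a primitive lattice point, i.e. the primitive lattice generator of the ray $C\cap M_V$ satisfies $\varphi_{k+1}=1$.
   Context: $M$ lattice of rank $n$, $N=\mathrm{Hom}(M,\mathbb{Z})$; $\Sigma$ complete fan of strictly convex rational cones in $M_\mathbb{R}$ with toric variety $Y_\Sigma$, $\Sigma[1]$ primitive ray generators, $D_\rho$ torus-invariant prime divisors. $\mathbb{Q}$-nef partition: ordered partition $\Sigma[1]=E_1\sqcup\dots\sqcup E_{k+1}$ with convex functions $\varphi_i(v)=\max_C\langle u_{i,C},v\rangle$ ($u_{i,C}\in N\otimes\mathbb{Q}$), linear on each cone, $\varphi_i(\rho)=\delta_{ij}$ for $\rho\in E_j$; $D_i$ is Cartier iff $\varphi_i$ takes integer values on $M$. Amenable collection: $V=\{v_1,\dots,v_k\}\subset N$ with $\langle v_i,\rho\rangle=-1$ on $E_i$, $\ge0$ on $E_j$ for $i<j\le k+1$, $=0$ on $E_j$ for $j<i$. $M_V=\{u\in M_\mathbb{R}:\langle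 v_i,u\rangle=0\ \forall i\}$. *)

(* M = N = Z^n inside Q^n, dual pairing = dot product. *)
From HB Require Import structures.
From mathcomp Require Import all_boot all_order all_algebra.
Set Implicit Arguments. Unset Strict Implicit. Unset Printing Implicit Defensive.
Import Order.TTheory GRing.Theory Num.Theory.
Local Open Scope ring_scope.

Definition pairing (n : nat) (u x : 'rV[rat]_n) : rat := \sum_(j < n) u 0 j * x 0 j.

Definition lattice_pt (n : nat) (x : 'rV[rat]_n) : Prop :=
  forall j, x 0 j \is a Num.int.

Definition primitive (n : nat) (x : 'rV[rat]_n) : Prop :=
  [/\ lattice_pt x, x != 0 &
      forall (w : 'rV[rat]_n) (m : nat), lattice_pt w -> x = m%:R *: w -> m = 1%N].

Definition in_cone (n : nat) (I : finType) (ray : I -> 'rV[rat]_n) (S : {set I})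
  (x : 'rV[rat]_n) : Prop :=
  exists lam : I -> rat, (forall i, 0 <= lam i) /\ x = \sum_(i in S) lam i *: ray i.

Definition is_face (n : nat) (I : finType) (ray : I -> 'rV[rat]_n) (F S : {set I}) : Prop :=
  exists u : 'rV[rat]_n,
    (forall i, i \in S -> 0 <= pairing u (ray i)) /\
    F = [set i in S | pairing u (ray i) == 0].

Definition strictly_convex (n : nat) (I : finType) (ray : I -> 'rV[rat]_n) (S : {set I}) : Prop :=
  forall x, in_cone ray S x -> in_cone ray S (- x) -> x = 0.

(* Sigma is a fan of strictly convex rational cones whose set of rays
   Sigma[1] is exactly {ray i | i : I}, each ray i being primitive; each cone
   of Sigma is recorded by its set of rays. *)
Definition is_fan (n : nat) (I : finType) (ray : I -> 'rV[rat]_n) (Sigma : {set {set I}}) : Prop :=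
  [/\ (forall i, primitive (ray i)) /\ (forall i, [set i] \in Sigma),
      (forall S, S \in Sigma -> strictly_convex ray S),
      (forall S i, S \in Sigma -> i \in S -> is_face ray [set i] S),
      (forall S F, S \in Sigma -> is_face ray F S -> F \in Sigma) &
      (forall S T, S \in Sigma -> T \in Sigma ->
         is_face ray (S :&: T) S /\
         (forall x, in_cone ray S x -> in_cone ray T x -> in_cone ray (S :&: T) x))].

Definition complete_fan (n : nat) (I : finType) (ray : I -> 'rV[rat]_n) (Sigma : {set {set I}}) : Prop :=
  is_fan ray Sigma /\ forall x, exists2 S, S \in Sigma & in_cone ray S x.

(* Q-nef partition: E r = j means ray r lies in E_{j+1} (0-based parts,
   the last part ord_max is E_{k+1}); phi i is E_{i+1}'s function
   phi_i(x) = max_{C in Sigma} <u i C, x>, linear on each cone C (equal to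
   <u i C, _> there), with phi_i(rho) = delta. *)
Definition qnef_partition (n : nat) (I : finType) (ray : I -> 'rV[rat]_n)
  (Sigma : {set {set I}}) (k : nat) (E : I -> 'I_k.+1)
  (u : 'I_k.+1 -> {set I} -> 'rV[rat]_n) (phi : 'I_k.+1 -> 'rV[rat]_n -> rat) : Prop :=
  forall i : 'I_k.+1,
    [/\ (forall x, (forall S, S \in Sigma -> pairing (u i S) x <= phi i x) /\
                   exists2 S, S \in Sigma & phi i x = pairing (u i S) x),
        (forall S x, S \in Sigma -> in_cone ray S x -> phi i x = pairing (u i S) x) &
        (forall r, phi i (ray r) = (E r == i)%:R)].

(* D_i Cartier iff phi_i is integer valued on M *)
Definition cartier (n k : nat) (phi : 'I_k.+1 -> 'rV[rat]_n -> rat) (i : 'I_k.+1) : Prop :=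
  forall x, lattice_pt x -> phi i x \is a Num.int.

(* amenable collection v_1..v_k (0-based: v i pairs with part i) *)
Definition amenable (n : nat) (I : finType) (ray : I -> 'rV[rat]_n) (k : nat)
  (E : I -> 'I_k.+1) (v : 'I_k -> 'rV[rat]_n) : Prop :=
  (forall i, lattice_pt (v i)) /\
  forall (i : 'I_k) (r : I),
    [/\ nat_of_ord (E r) = nat_of_ord i -> pairing (v i) (ray r) = -1,
        (nat_of_ord i < E r)%N -> 0 <= pairing (v i) (ray r) &
        (E r < nat_of_ord i)%N -> pairing (v i) (ray r) = 0].

Definition in_MV (n k : nat) (v : 'I_k -> 'rV[rat]_n) (x : 'rV[rat]_n) : Prop :=
  forall i, pairing (v i) x = 0.

Definition one_dim (n : nat) (P : 'rV[rat]_n -> Prop) : Prop :=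
  exists x, [/\ x != 0, P x & forall y, P y -> exists t : rat, y = t *: x].

From HB Require Import structures.
From mathcomp Require Import all_boot all_order all_algebra.
Set Implicit Arguments. Unset Strict Implicit. Unset Printing Implicit Defensive.
Import Order.TTheory GRing.Theory Num.Theory.
From mathcomp Require Import zify.
Local Open Scope ring_scope.

(* Write a generator of the line C ∩ M_V as a nonnegative combination of the
   rays of C.  Since v_i pairs to -1 with E_i, nonnegatively with the later
   parts and to 0 with the earlier ones, its support meets E_{k+1}, in ρ_0
   say, and starting from y = ρ_0 one can add, for i = k, ..., 1 in turn, a
   nonnegative integer multiple c_i of a support ray ρ_i ∈ E_i that makes
   <v_i, y> = 0 without disturbing <v_j, y> for j > i.  The lattice point y of
   C ∩ M_V so obtained has φ_{k+1}(y) = 1 and φ_i(y) = c_i.  If y = m w with w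
   a lattice point, then either φ_{k+1}(w) = 1/m is an integer (case 1), or
   ρ_0 = m (w - Σ_i φ_i(w) ρ_i) is m times a lattice point (case 2); hence y
   is primitive, and it is the only primitive point of the ray. *)

Lemma pairing_is_linear n (u : 'rV[rat]_n) : linear_for *%R (pairing u).
Proof.
move=> a x y; rewrite /pairing mulr_sumr -big_split /=.
by apply: eq_bigr => j _; rewrite !mxE mulrDr mulrCA.
Qed.

HB.instance Definition _ n (u : 'rV[rat]_n) :=
  GRing.isLinear.Build rat 'rV[rat]_n rat *%R (pairing u) (pairing_is_linear u).

Section Lattice.
Variable n : nat.
Implicit Types x y w : 'rV[rat]_n.

Lemma lattice_ptD x y : lattice_pt x -> lattice_pt y -> lattice_pt (x + y).
Proof. by move=> hx hy j; rewrite mxE rpredD. Qed.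

Lemma lattice_ptZ a x : a \is a Num.int -> lattice_pt x -> lattice_pt (a *: x).
Proof. by move=> ha hx j; rewrite mxE rpredM. Qed.

Lemma lattice_ptB x y : lattice_pt x -> lattice_pt y -> lattice_pt (x - y).
Proof.
by move=> hx hy; apply: lattice_ptD; rewrite // -scaleN1r; apply: lattice_ptZ.
Qed.

Lemma lattice_pt_sum (J : finType) (P : pred J) (F : J -> 'rV[rat]_n) :
  (forall j, P j -> lattice_pt (F j)) -> lattice_pt (\sum_(j | P j) F j).
Proof.
move=> hF; apply: (big_ind (@lattice_pt n)) => //; last exact: lattice_ptD.
by move=> j; rewrite mxE.
Qed.

Lemma pairing_lattice_int u x :
  lattice_pt u -> lattice_pt x -> pairing u x \is a Num.int.
Proof. by move=> hu hx; apply: rpred_sum => j _; rewrite rpredM. Qed.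

Lemma primitive_intmul_eq1 x w (a : int) :
  primitive x -> lattice_pt w -> 0 < a -> x = a%:~R *: w -> a = 1.
Proof.
move=> [_ _ hx] hw a_gt0 xE; rewrite -(gtz0_abs a_gt0); congr Posz.
by apply: hx hw _; rewrite xE -[in LHS](gtz0_abs a_gt0).
Qed.

(* Gauss: [a] divides [b x_j] and is coprime to [b], so it divides [x_j]. *)
Lemma lattice_pt_divz x y (a b : int) :
  coprimez a b -> lattice_pt x -> lattice_pt y -> b%:~R *: x = a%:~R *: y ->
  lattice_pt ((a%:~R)^-1 *: x).
Proof.
move=> coab hx hy bxay j; have [->|a_neq0] := eqVneq a 0.
  by rewrite invr0 scale0r mxE.
have /intrP[X xjE] := hx j; have /intrP[Y yjE] := hy j.
have a_dvd : (a %| X)%Z.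
  rewrite -(Gauss_dvdzr _ coab); apply/dvdzP; exists Y; apply: (@intr_inj rat).
  have := congr1 (fun z : 'rV[rat]_n => z 0 j) bxay.
  by rewrite !mxE xjE yjE !intrM mulrC => ->; rewrite mulrC.
rewrite mxE xjE; move: a_dvd; rewrite dvdz_eq => /eqP <-.
by rewrite intrM mulrCA mulVf ?intr_eq0 // mulr1 intr_int.
Qed.

Lemma primitive_scale_eq1 x y s :
  primitive x -> primitive y -> x = s *: y -> 0 < s -> s = 1.
Proof.
move=> px py xE s_gt0.
have [[hx _ _] [hy _ _]] := (px, py).
have a_gt0 : 0 < numq s by rewrite numq_gt0.
have b_gt0 := denq_gt0 s.
have sE : s = (numq s)%:~R / (denq s)%:~R by rewrite divq_num_den.
have b_neq0 : (denq s)%:~R != 0 :> rat by rewrite intr_eq0 gt_eqF.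
have bxay : (denq s)%:~R *: x = (numq s)%:~R *: y.
  by rewrite xE scalerA numqE mulrC.
have a1 : numq s = 1.
  have coab : coprimez (numq s) (denq s) := coprime_num_den s.
  apply: (primitive_intmul_eq1 px (lattice_pt_divz coab hx hy bxay) a_gt0).
  by rewrite scalerA mulfV ?scale1r // intr_eq0 gt_eqF.
have b1 : denq s = 1.
  apply: (primitive_intmul_eq1 py hx b_gt0).
  by apply: (scalerI b_neq0); rewrite a1 scale1r in bxay; rewrite -bxay.
by rewrite sE a1 b1 divr1.
Qed.

End Lattice.

Section Cone.
Variables (n : nat) (I : finType) (ray : I -> 'rV[rat]_n) (S : {set I}).

Lemma in_cone0 : in_cone ray S 0.
Proof. by exists (fun=> 0); split=> //; rewrite big1 // => j _; rewrite scale0r. Qed.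

Lemma in_cone_ray i : i \in S -> in_cone ray S (ray i).
Proof.
move=> iS; exists (fun j => (j == i)%:R); split=> [j|]; first exact: ler0n.
rewrite (bigD1 i) //= eqxx scale1r big1 ?addr0 // => j /andP[_ /negbTE ->].
by rewrite scale0r.
Qed.

Lemma in_coneD x y : in_cone ray S x -> in_cone ray S y -> in_cone ray S (x + y).
Proof.
move=> [a [a_ge0 ->]] [b [b_ge0 ->]]; exists (fun j => a j + b j).
split=> [j|]; first exact: addr_ge0.
by rewrite -big_split; apply: eq_bigr => j _; rewrite scalerDl.
Qed.

Lemma in_coneZ t x : 0 <= t -> in_cone ray S x -> in_cone ray S (t *: x).
Proof.
move=> t_ge0 [a [a_ge0 ->]]; exists (fun j => t * a j).
split=> [j|]; first exact: mulr_ge0.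
by rewrite scaler_sumr; apply: eq_bigr => j _; rewrite scalerA.
Qed.

Lemma in_cone_sum (J : finType) (P : pred J) (F : J -> 'rV[rat]_n) :
  (forall j, P j -> in_cone ray S (F j)) -> in_cone ray S (\sum_(j | P j) F j).
Proof.
move=> hF; apply: (big_ind (in_cone ray S)) => //; [exact: in_cone0|exact: in_coneD].
Qed.

End Cone.

Lemma one_dim_scale n (P : 'rV[rat]_n -> Prop) y x :
  one_dim P -> P y -> y != 0 -> P x -> exists t, x = t *: y.
Proof.
move=> [g [_ _ hg]] Py y_neq0 Px.
have [[tx ->] [ty yE]] := (hg x Px, hg y Py).
have ty_neq0 : ty != 0 by apply: contraNneq y_neq0 => ty0; rewrite yE ty0 scale0r.
by exists (tx / ty); rewrite yE scalerA divfK.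
Qed.

Section QnefPartition.
Variables (n : nat) (I : finType) (ray : I -> 'rV[rat]_n) (Sigma : {set {set I}}).
Variables (k : nat) (E : I -> 'I_k.+1).
Variables (u : 'I_k.+1 -> {set I} -> 'rV[rat]_n) (phi : 'I_k.+1 -> 'rV[rat]_n -> rat).
Hypothesis qnef : qnef_partition ray Sigma E u phi.
Variable S : {set I}.
Hypothesis S_Sigma : S \in Sigma.

Lemma qnef_phi_cone i x : in_cone ray S x -> phi i x = pairing (u i S) x.
Proof. by have [_ lin _] := qnef i; apply: lin. Qed.

Lemma qnef_pairing_ray i j : j \in S -> pairing (u i S) (ray j) = (E j == i)%:R.
Proof.
move=> jS; have [_ _ phi_ray] := qnef i.
by rewrite -qnef_phi_cone ?phi_ray //; apply: in_cone_ray.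
Qed.

Lemma qnef_phi_ge0 i x : in_cone ray S x -> 0 <= phi i x.
Proof.
move=> xS; rewrite qnef_phi_cone //; have [a [a_ge0 ->]] := xS.
rewrite linear_sum; apply: sumr_ge0 => j jS.
by rewrite linearZ /= qnef_pairing_ray // mulr_ge0.
Qed.

Lemma qnef_phiZ i t x :
  in_cone ray S x -> in_cone ray S (t *: x) -> phi i (t *: x) = t * phi i x.
Proof. by move=> xS txS; rewrite !qnef_phi_cone // linearZ. Qed.

End QnefPartition.

Section AmenableSupport.
Variables (n : nat) (I : finType) (ray : I -> 'rV[rat]_n) (k : nat).
Variables (E : I -> 'I_k.+1) (v : 'I_k -> 'rV[rat]_n).
Hypothesis amen : amenable ray E v.
Variables (C : {set I}) (lam : I -> rat).
Hypothesis lam_ge0 : forall j, 0 <= lam j.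
Hypothesis comb_MV : in_MV v (\sum_(j in C) lam j *: ray j).

Definition in_support j := (j \in C) && (0 < lam j).

Lemma support_pairing_eq0 (i : 'I_k) (e : rat) :
  e != 0 -> (forall j, in_support j -> 0 <= e * pairing (v i) (ray j)) ->
  forall j, in_support j -> pairing (v i) (ray j) = 0.
Proof.
move=> e_neq0 sign_e j /andP[jC lam_gt0].
have terms_ge0 j' : j' \in C -> 0 <= lam j' * (e * pairing (v i) (ray j')).
  move=> j'C; have [lam_j'_gt0|lam_j'_le0] := ltrP 0 (lam j').
    by rewrite mulr_ge0 ?sign_e // /in_support j'C.
  by rewrite (@le_anti _ _ (lam j') 0) ?lam_j'_le0 ?lam_ge0 ?mul0r.
have sum_eq0 : \sum_(j' in C) lam j' * (e * pairing (v i) (ray j')) = 0.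
  transitivity (e * pairing (v i) (\sum_(j' in C) lam j' *: ray j')).
    by rewrite linear_sum mulr_sumr; apply: eq_bigr => j' _; rewrite linearZ mulrCA.
  by rewrite comb_MV mulr0.
have /eqP := psumr_eq0P terms_ge0 sum_eq0 jC.
by rewrite !mulf_eq0 (gt_eqF lam_gt0) (negbTE e_neq0) => /eqP.
Qed.

Lemma support_part_empty_pairing_eq0 (i : 'I_k) :
  (forall j, in_support j -> nat_of_ord (E j) != i) ->
  forall j, in_support j -> pairing (v i) (ray j) = 0.
Proof.
move=> no_part; apply: (support_pairing_eq0 (oner_neq0 _)) => j j_supp.
rewrite mul1r; have [_ ge0 eq0] := amen.2 i j.
case: (ltngtP (E j) i) => [/eq0 -> //|/ge0 //|Eji].
by move: (no_part j j_supp); rewrite Eji eqxx.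
Qed.

(* If the highest part met by the support were [E_i] with [i < k], the pairing
   with [v_i] would be a nonzero sum of nonpositive terms. *)
Lemma support_top :
  \sum_(j in C) lam j *: ray j != 0 -> exists2 j, in_support j & E j = ord_max.
Proof.
move=> comb_neq0; have [j0 j0_supp] : exists j, in_support j.
  apply/existsP; apply: contraNT comb_neq0; rewrite negb_exists => /forallP no_supp.
  rewrite big1 // => j jC; have := no_supp j; rewrite /in_support jC -leNgt => le0.
  by rewrite (@le_anti _ _ (lam j) 0) ?le0 ?lam_ge0 ?scale0r.
have [jm jm_supp jm_max] :=
  @arg_maxnP I j0 in_support (fun j => nat_of_ord (E j)) j0_supp.
exists jm => //; apply/val_inj/eqP; rewrite /= eqn_leq -ltnS ltn_ord leqNgt /=.
apply/negP => Ejm_lt; pose i := Ordinal Ejm_lt.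
have [eqN1 _ eq0] := amen.2 i jm.
have sign j : in_support j -> 0 <= -1 * pairing (v i) (ray j).
  move=> j_supp; have [eqN1' _ eq0'] := amen.2 i j.
  case: (ltngtP (E j) i) => [/eq0' ->|Eji|/eqN1' ->]; rewrite ?mulr0 ?mulrNN ?mulr1 //.
  by have /= := jm_max j j_supp; rewrite leqNgt Eji.
have m1_neq0 : -1 != 0 :> rat by rewrite oppr_eq0 oner_eq0.
by have := support_pairing_eq0 m1_neq0 sign jm_supp; rewrite eqN1 //; apply/eqP.
Qed.

Hypothesis ray_lattice : forall j, lattice_pt (ray j).
Variable q0 : I.
Hypotheses (q0_supp : in_support q0) (q0_top : E q0 = ord_max).

Definition top_comb (c : 'I_k -> rat) (r : 'I_k -> I) :=
  ray q0 + \sum_i c i *: ray (r i).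

Definition admissible (c : 'I_k -> rat) (r : 'I_k -> I) :=
  forall i, c i \is a Num.nat /\
    (c i != 0 -> in_support (r i) /\ nat_of_ord (E (r i)) = i).

Definition balanced_from (i : nat) (c : 'I_k -> rat) (r : 'I_k -> I) :=
  (forall j : 'I_k, (j < i)%N -> c j = 0) /\
  (forall j : 'I_k, (i <= j)%N -> pairing (v j) (top_comb c r) = 0).

Lemma pairing_top_comb w c r :
  pairing w (top_comb c r) =
    pairing w (ray q0) + \sum_i c i * pairing w (ray (r i)).
Proof.
by rewrite linearD linear_sum; congr (_ + _); apply: eq_bigr => i _; rewrite linearZ.
Qed.

Lemma top_comb_lattice c r : admissible c r -> lattice_pt (top_comb c r).
Proof.
move=> adm; apply: lattice_ptD => //; apply: lattice_pt_sum => i _.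
by apply: lattice_ptZ => //; apply: intr_nat; have [] := adm i.
Qed.

Lemma top_comb_update c r (i : 'I_k) s q : c i = 0 ->
  top_comb [eta c with i |-> s] [eta r with i |-> q] = top_comb c r + s *: ray q.
Proof.
move=> ci0; rewrite /top_comb -addrA; congr (_ + _).
rewrite (bigD1 i) //= [in RHS](bigD1 i) //= !eqxx ci0 scale0r add0r addrC.
by congr (_ + _); apply: eq_bigr => j /negbTE /= ->.
Qed.

Lemma top_comb_step (i : 'I_k) c r : admissible c r -> balanced_from i.+1 c r ->
  exists c' r', admissible c' r' /\ balanced_from i c' r'.
Proof.
move=> adm [c_lo bal_hi]; set s := pairing (v i) (top_comb c r).
have used_later j : c j != 0 -> (i < E (r j))%N /\ in_support (r j).
  move=> cj_neq0; have [_ /(_ cj_neq0) [r_supp ->]] := adm j; split=> //.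
  by rewrite ltnNge; apply: contra cj_neq0 => /c_lo ->.
have s_ge0 : 0 <= s.
  rewrite /s pairing_top_comb addr_ge0 //.
    by have [_ ge0 _] := amen.2 i q0; apply: ge0; rewrite q0_top.
  apply: sumr_ge0 => j _; have [->|cj_neq0] := eqVneq (c j) 0; first by rewrite mul0r.
  have [_ ge0 _] := amen.2 i (r j); have [Erj _] := used_later j cj_neq0.
  by apply: mulr_ge0; [apply: natr_ge0; case: (adm j)|apply: ge0].
have s_nat : s \is a Num.nat.
  rewrite natrEint s_ge0 andbT.
  by apply: pairing_lattice_int; [case: amen|exact: top_comb_lattice].
have [s_eq0|s_neq0] := eqVneq s 0.
  exists c, r; split=> //; split=> [j /ltnW|j]; first exact: c_lo.
  by rewrite leq_eqVlt => /orP[/eqP/val_inj <-|]; [exact: s_eq0|exact: bal_hi].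
have [q /andP[q_supp /eqP Eq]|no_part] :=
  pickP (fun q => in_support q && (nat_of_ord (E q) == i)).
  exists [eta c with i |-> s], [eta r with i |-> q]; split.
    by move=> j /=; case: eqP => [-> | _]; [split=> // _; split|exact: adm].
  rewrite /balanced_from top_comb_update ?c_lo //; split=> [j j_lt|j].
    by rewrite /= ifN ?c_lo 1?ltnW //; apply: contraTneq j_lt => ->; rewrite ltnn.
  rewrite linearD linearZ /= leq_eqVlt => /orP[/eqP/val_inj <-|i_lt_j].
    by have [eqN1 _ _] := amen.2 i q; rewrite -/s eqN1 // mulrN1 subrr.
  by have [_ _ eq0] := amen.2 j q; rewrite bal_hi // eq0 ?Eq // mulr0 addr0.
have part_empty j : in_support j -> nat_of_ord (E j) != i.
  by move=> j_supp; have := no_part j; rewrite /= j_supp => /negbT.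
move/eqP: s_neq0; rewrite /s pairing_top_comb.
rewrite support_part_empty_pairing_eq0 // add0r big1 // => j _.
have [->|cj_neq0] := eqVneq (c j) 0; first by rewrite mul0r.
by rewrite support_part_empty_pairing_eq0 ?mulr0 //; have [] := used_later j cj_neq0.
Qed.

Lemma top_comb_in_MV : exists c r, admissible c r /\ in_MV v (top_comb c r).
Proof.
suff bal d : (d <= k)%N -> exists c r, admissible c r /\ balanced_from (k - d)%N c r.
  have [c [r [adm [_ bal0]]]] := bal k (leqnn k).
  by exists c, r; split=> // j; apply: bal0; rewrite subnn.
elim: d => [_|d IHd d_lt_k].
  exists (fun=> 0), (fun=> q0); split=> [i|]; first by rewrite eqxx.
  by split=> j; rewrite subn0 // leqNgt ltn_ord.
have i_lt_k : (k - d.+1 < k)%N by lia.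
have [c [r [adm bal]]] := IHd (ltnW d_lt_k).
apply: (top_comb_step (i := Ordinal i_lt_k) adm).
by have -> : (Ordinal i_lt_k).+1 = (k - d)%N by rewrite /=; lia.
Qed.

End AmenableSupport.

Section TopCombination.
Variables (n : nat) (I : finType) (ray : I -> 'rV[rat]_n) (Sigma : {set {set I}}).
Variables (k : nat) (E : I -> 'I_k.+1).
Variables (u : 'I_k.+1 -> {set I} -> 'rV[rat]_n) (phi : 'I_k.+1 -> 'rV[rat]_n -> rat).
Hypothesis qnef : qnef_partition ray Sigma E u phi.
Variables (C : {set I}) (lam : I -> rat).
Hypothesis C_Sigma : C \in Sigma.
Variables (q0 : I) (c : 'I_k -> rat) (r : 'I_k -> I).
Hypotheses (q0_C : q0 \in C) (q0_top : E q0 = ord_max).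
Hypothesis adm : admissible E C lam c r.

Let y := top_comb ray q0 c r.

Lemma top_comb_in_cone : in_cone ray C y.
Proof.
apply: in_coneD; first exact: in_cone_ray.
apply: in_cone_sum => i _; have [->|ci_neq0] := eqVneq (c i) 0.
  by rewrite scale0r; apply: in_cone0.
have [c_nat /(_ ci_neq0) [/andP[ri_C _] _]] := adm i.
by apply: in_coneZ; [exact: natr_ge0 | exact: in_cone_ray].
Qed.

Lemma phi_top_comb i : phi i y = (E q0 == i)%:R + \sum_j c j * (E (r j) == i)%:R.
Proof.
rewrite (qnef_phi_cone qnef C_Sigma _ top_comb_in_cone) pairing_top_comb.
rewrite (qnef_pairing_ray qnef C_Sigma) //; congr (_ + _); apply: eq_bigr => j _.
have [->|cj_neq0] := eqVneq (c j) 0; first by rewrite !mul0r.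
have [_ /(_ cj_neq0) [/andP[rj_C _] _]] := adm j.
by rewrite (qnef_pairing_ray qnef C_Sigma).
Qed.

Lemma phi_top_comb_top : phi ord_max y = 1.
Proof.
rewrite phi_top_comb q0_top eqxx big1 ?addr0 // => j _.
have [->|cj_neq0] := eqVneq (c j) 0; first by rewrite mul0r.
have [_ /(_ cj_neq0) [_ Erj]] := adm j.
rewrite (_ : E (r j) == ord_max = false) ?mulr0 //.
by apply/negbTE; rewrite -val_eqE /= Erj neq_ltn ltn_ord.
Qed.

Lemma phi_top_comb_widen j : phi (widen_ord (leqnSn k) j) y = c j.
Proof.
rewrite phi_top_comb q0_top -val_eqE /= eqn_leq leqNgt ltn_ord /= add0r.
rewrite (bigD1 j) //= big1 ?addr0 => [|j' j'_neq].
  have [->|cj_neq0] := eqVneq (c j) 0; first by rewrite mul0r.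
  by have [_ /(_ cj_neq0) [_ Erj]] := adm j; rewrite -val_eqE /= Erj eqxx mulr1.
have [->|cj'_neq0] := eqVneq (c j') 0; first by rewrite mul0r.
have [_ /(_ cj'_neq0) [_ Erj']] := adm j'.
by rewrite -val_eqE /= Erj' val_eqE (negbTE j'_neq) mulr0.
Qed.

Hypothesis ray_primitive : forall j, primitive (ray j).

Lemma top_comb_primitive :
  cartier phi ord_max \/ (forall i : 'I_k.+1, i != ord_max -> cartier phi i) ->
  primitive y.
Proof.
move=> cart.
have ray_lattice j : lattice_pt (ray j) by have [] := ray_primitive j.
have y_neq0 : y != 0.
  apply: contra_eq_neq phi_top_comb_top => ->.
  by rewrite (qnef_phi_cone qnef C_Sigma _ (in_cone0 _ _)) linear0 eq_sym oner_neq0.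
split=> //; first exact: top_comb_lattice.
move=> w m w_lattice yE.
have m_neq0 : m%:R != 0 :> rat by apply: contra_neq y_neq0 => m0; rewrite yE m0 scale0r.
have wE : w = (m%:R)^-1 *: y by rewrite yE scalerA mulVf ?scale1r.
have phiE i : phi i y = m%:R * phi i w.
  have w_C : in_cone ray C w.
    by rewrite wE; apply: in_coneZ; [rewrite invr_ge0 ler0n|exact: top_comb_in_cone].
  by rewrite [in LHS]yE (qnef_phiZ qnef C_Sigma) // -yE; apply: top_comb_in_cone.
case: cart => [cart_top|cart_low].
  have /intrP[z wz] := cart_top w w_lattice.
  have mz1 : (m%:Z * z = 1)%R.
    by apply: (@intr_inj rat); rewrite intrM -wz -phiE phi_top_comb_top.
  move/(congr1 absz): mz1; rewrite abszM /= => /eqP.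
  by rewrite muln_eq1 => /andP[/eqP].
set w' := w - \sum_j phi (widen_ord (leqnSn k) j) w *: ray (r j).
have [_ _ q0_prim] := ray_primitive q0; apply: (q0_prim w').
  apply: lattice_ptB => //; apply: lattice_pt_sum => j _; apply: lattice_ptZ => //.
  by apply: cart_low => //; rewrite -val_eqE /= neq_ltn ltn_ord.
rewrite scalerBr -yE scaler_sumr /y /top_comb.
under [X in _ = _ - X]eq_bigr => j _ do rewrite scalerA -phiE phi_top_comb_widen.
by rewrite addrK.
Qed.

End TopCombination.

Theorem proposition2p13 (n : nat) (I : finType) (ray : I -> 'rV[rat]_n)
  (Sigma : {set {set I}}) (k : nat) (E : I -> 'I_k.+1)
  (u : 'I_k.+1 -> {set I} -> 'rV[rat]_n) (phi : 'I_k.+1 -> 'rV[rat]_n -> rat)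
  (v : 'I_k -> 'rV[rat]_n) (C : {set I}) :
  complete_fan ray Sigma ->
  qnef_partition ray Sigma E u phi ->
  amenable ray E v ->
  C \in Sigma ->
  one_dim (fun x => in_cone ray C x /\ in_MV v x) ->
  (forall T, T \in Sigma -> T \proper C ->
     ~ one_dim (fun x => in_cone ray T x /\ in_MV v x)) ->
  (cartier phi ord_max \/ (forall i : 'I_k.+1, i != ord_max -> cartier phi i)) ->
  (forall x, in_cone ray C x -> in_MV v x -> lattice_pt x ->
     phi ord_max x = 1 -> primitive x) /\
  (forall p, in_cone ray C p -> in_MV v p -> primitive p -> phi ord_max p = 1).
Proof.
move=> [[[ray_prim _] _ _ _ _] _] qnef amen C_Sigma line _ cart.
have ray_lattice j : lattice_pt (ray j) by have [] := ray_prim j.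
have [g [g_neq0 [[lam [lam_ge0 gE]] g_MV] _]] := line.
rewrite gE in g_neq0 g_MV.
have [q0 q0_supp q0_top] := support_top amen lam_ge0 g_MV g_neq0.
have [c [r [adm y_MV]]] := top_comb_in_MV amen lam_ge0 g_MV ray_lattice q0_supp q0_top.
have /andP[q0_C _] := q0_supp.
set y := top_comb ray q0 c r in y_MV.
have y_C : in_cone ray C y := top_comb_in_cone ray q0_C adm.
have phi_y : phi ord_max y = 1 := phi_top_comb_top qnef C_Sigma q0_C q0_top adm.
have y_prim : primitive y :=
  top_comb_primitive qnef C_Sigma q0_C q0_top adm ray_prim cart.
have on_line x : in_cone ray C x -> in_MV v x -> x = phi ord_max x *: y.
  move=> x_C x_MV; have [|t xE] := one_dim_scale line (conj y_C y_MV) _ (conj x_C x_MV).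
    by case: y_prim.
  by rewrite xE (qnef_phiZ qnef C_Sigma) -?xE // phi_y mulr1.
split=> [x x_C x_MV _ phi_x|p p_C p_MV p_prim].
  by rewrite (on_line x) // phi_x scale1r.
apply: (primitive_scale_eq1 p_prim y_prim (on_line p p_C p_MV)).
rewrite lt_def (qnef_phi_ge0 qnef C_Sigma) // andbT; have [_ p_neq0 _] := p_prim.
by apply: contra_neq p_neq0 => phi_p0; rewrite (on_line p) // phi_p0 scale0r.
Qed.
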